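(* For every composite positive integer $n$ the following are equivalent: (i) $n$ is a Gaussian Carmichael number; (ii) $\Lambda(n)$ divides $\mathcal{F}(n)$; (iii) for every prime divisor $p$ of $n$, $\mathcal{F}(p)$ divides $\mathcal{F}(n)$, and one of the following holds: (a) $n$ is odd and square-free; (b) $4\mid n$ and $n/4\in\{2,3,5\}$ or $n/4$ is not a prime.
   Context: For a positive integer $n$, $\mathcal{G}_n=\{a+bi\in\mathbb{Z}[i]/n\mathbb{Z}[i] : a^2+b^2\equiv 1\pmod n\}$ (a multiplicative group), and $\Lambda(n)$ is the exponent of $\mathcal{G}_n$. The function $\mathcal{F}$ is defined by $\mathcal{F}(n)=n-1$ if $n\equiv 1\pmod 4$, $\mathcal{F}(n)=n+1$ if $n\equiv 3 \pmod 4$, $\mathcal{F}(n)=n$ otherwise. A composite integer $n$ is a Gaussian Fermat pseudoprime to base $z\in\mathbb{Z}[i]$ if $\gcd(n,z\overline{z})=1$ and $(z/\overline{z})^{\mathcal{F}(n)}\equiv 1\pmod n$ in $\mathbb{Z}[i]/n\mathbb{Z}[i]$. A composite $n$ is a Gaussian Carmichael number if it is a Gaussian Fermat pseudoprime to base $z$ for every $z\in\mathbb{Z}[i]$ with $\gcd(n,z\overline{z})=1$. *)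

(* Gaussian integers Z[i] are represented as pairs of ints
   (a, b) standing for a + b i; residues in Z[i]/nZ[i] are handled through
   componentwise congruence modulo n. *)
From HB Require Import structures.
From mathcomp Require Import all_boot all_order all_algebra.
From Stdlib Require Import ClassicalEpsilon.
Set Implicit Arguments. Unset Strict Implicit. Unset Printing Implicit Defensive.
Import Order.TTheory GRing.Theory Num.Theory.

Local Open Scope ring_scope.

Definition gauss := (int * int)%type.

Definition gone : gauss := (1, 0).
Definition gmul (z w : gauss) : gauss :=
  (z.1 * w.1 - z.2 * w.2, z.1 * w.2 + z.2 * w.1).
Definition gconj (z : gauss) : gauss := (z.1, - z.2).
Definition gnorm (z : gauss) : int := z.1 ^+ 2 + z.2 ^+ 2.
Definition gpow (z : gauss) (k : nat) : gauss := iter k (gmul z) gone.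

Definition gcong (n : nat) (z w : gauss) : bool :=
  ((z.1 == w.1 %[mod n])%Z && (z.2 == w.2 %[mod n])%Z).

Definition inGn (n : nat) (g : gauss) : bool :=
  (gnorm g == 1 %[mod n])%Z.

(* Lambda(n): the exponent of G_n, i.e. the least m > 0 with g^m = 1
   for every g in G_n (chosen by epsilon; such m exists since G_n is finite). *)
Definition is_exponent_Gn (n m : nat) : Prop :=
  (0 < m)%N /\ (forall g, inGn n g -> gcong n (gpow g m) gone) /\
  (forall m', (0 < m')%N -> (forall g, inGn n g -> gcong n (gpow g m') gone) ->
              (m <= m')%N).

Definition Lambda (n : nat) : nat :=
  epsilon (inhabits 0%N) (is_exponent_Gn n).

Local Close Scope ring_scope.

Definition FF (n : nat) : nat :=
  if n %% 4 == 1 then n.-1 else if n %% 4 == 3 then n.+1 else n.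

Definition composite (n : nat) : bool := (1 < n) && ~~ prime n.

(* (z / conj z)^F(n) = 1 in Z[i]/nZ[i]: w is the inverse of conj z mod n *)
Definition quot_pow_one (n : nat) (z : gauss) (k : nat) : Prop :=
  exists w : gauss, gcong n (gmul (gconj z) w) gone /\
                    gcong n (gpow (gmul z w) k) gone.

Definition gauss_fermat_psp (n : nat) (z : gauss) : Prop :=
  composite n /\ coprimez (n%:Z) (gnorm z) /\ quot_pow_one n z (FF n).

Definition gauss_carmichael (n : nat) : Prop :=
  composite n /\
  forall z : gauss, coprimez (n%:Z) (gnorm z) -> gauss_fermat_psp n z.

Definition squarefree_nat (n : nat) : bool :=
  [forall p : 'I_n.+1, prime p ==> ~~ (p ^ 2 %| n)].

From HB Require Import structures.
From mathcomp Require Import all_boot all_order all_algebra all_fingroup all_solvable all_field.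
From mathcomp Require Import ring zify.
From Stdlib Require Import ClassicalEpsilon Classical Wf_nat.
Set Implicit Arguments. Unset Strict Implicit. Unset Printing Implicit Defensive.
Import GRing.Theory FinRing.Theory.

(* Write z ~ w (mod n) for congruence in Z[i]/nZ[i], and say that k kills
   G_n when g^k ~ 1 (mod n) for every g of norm 1 mod n; for k > 0 this is
   equivalent to Lambda(n) | k.  The proof runs the cycle
   (i) => Carmichael condition => (iii) => F(n) kills G_n <=> (ii) => (i),
   where the Carmichael condition for k says that z^k ~ conj(z)^k (mod n)
   for every z of norm prime to n.

   1. Local theory at an odd prime p: Z[i] maps into a finite field F of
      characteristic p containing a square root j of -1 (F = F_p when
      p = 1 mod 4, F = F_(p^2) when p = 3 mod 4).  Through this map F(p)
      kills G_p, and conversely the Carmichael condition mod p for k forces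
      F(p) | k.
   2. Lifting: g ~ 1 (mod m) gives g^q ~ 1 (mod qm) when qm | m^2, so
      p^(e-1) F(p) kills G_(p^e) and 2^e kills G_(2^e); by the Chinese
      remainder theorem any common multiple of these kills G_n.
   3. (iii) makes F(n) such a multiple, and if F(n) kills G_n then n is a
      Carmichael number because z / conj z = z^2 / N(z) lies in G_n.
   4. The Carmichael condition for n descends to every prime divisor p of n
      (giving F(p) | F(n)) and to p^2 | n (giving p | F(n)); elementary
      arithmetic of F then yields (iii). *)

Section GaussianArithmetic.
Local Open Scope ring_scope.

Lemma gmulC z w : gmul z w = gmul w z.
Proof. by case: z w => a b [c d]; rewrite /gmul /=; congr pair; ring. Qed.

Lemma gmulA z w u : gmul z (gmul w u) = gmul (gmul z w) u.
Proof. by case: z w u => a b [c d] [e f]; rewrite /gmul /=; congr pair; ring. Qed.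

Lemma gmul1 z : gmul gone z = z.
Proof. by case: z => a b; rewrite /gmul /=; congr pair; ring. Qed.

Lemma gmulr1 z : gmul z gone = z.
Proof. by rewrite gmulC gmul1. Qed.

Lemma gpowS z k : gpow z k.+1 = gmul z (gpow z k).
Proof. by []. Qed.

Lemma gpowD z m k : gpow z (m + k) = gmul (gpow z m) (gpow z k).
Proof.
elim: m => [|m IH]; first by rewrite add0n gmul1.
by rewrite addSn !gpowS IH gmulA.
Qed.

Lemma gpowM z m k : gpow z (m * k) = gpow (gpow z m) k.
Proof. by elim: k => [|k IH]; rewrite ?muln0 // mulnS gpowD IH. Qed.

Lemma gpowMn z w k : gpow (gmul z w) k = gmul (gpow z k) (gpow w k).
Proof.
elim: k => [|k IH]; first by rewrite gmul1.
by rewrite !gpowS IH !gmulA -[gmul (gmul z w) _]gmulA (gmulC w) !gmulA.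
Qed.

Lemma gpow1n k : gpow gone k = gone.
Proof. by elim: k => // k IH; rewrite gpowS IH gmul1. Qed.

Lemma gconj1 : gconj gone = gone.
Proof. by []. Qed.

Lemma gconjM z w : gconj (gmul z w) = gmul (gconj z) (gconj w).
Proof. by case: z w => a b [c d]; rewrite /gmul /gconj /=; congr pair; ring. Qed.

Lemma gconjX z k : gconj (gpow z k) = gpow (gconj z) k.
Proof. by elim: k => // k IH; rewrite !gpowS gconjM IH. Qed.

Lemma gnormM z w : gnorm (gmul z w) = gnorm z * gnorm w.
Proof. by case: z w => a b [c d]; rewrite /gmul /gnorm /=; ring. Qed.

Lemma gmul_conj z : gmul z (gconj z) = (gnorm z, 0).
Proof. by case: z => a b; rewrite /gmul /gconj /gnorm /=; congr pair; ring. Qed.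

End GaussianArithmetic.

Section Congruence.
Local Open Scope ring_scope.

Lemma gcongE n z w : gcong n z w = (n %| z.1 - w.1)%Z && (n %| z.2 - w.2)%Z.
Proof. by rewrite /gcong !eqz_mod_dvd. Qed.

Lemma gcong_refl n z : gcong n z z.
Proof. by rewrite gcongE !subrr dvdz0. Qed.

Lemma gcong_sym n z w : gcong n z w -> gcong n w z.
Proof. by rewrite !gcongE -(opprB z.1) -(opprB z.2) !rpredN. Qed.

Lemma gcong_trans n z w u : gcong n z w -> gcong n w u -> gcong n z u.
Proof.
rewrite !gcongE => /andP[h1 h2] /andP[h3 h4].
have -> : z.1 - u.1 = (z.1 - w.1) + (w.1 - u.1) by ring.
have -> : z.2 - u.2 = (z.2 - w.2) + (w.2 - u.2) by ring.
by apply/andP; split; apply: rpredD.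
Qed.

Lemma gcong_mul n z z' w w' :
  gcong n z z' -> gcong n w w' -> gcong n (gmul z w) (gmul z' w').
Proof.
case: z z' w w' => a b [a' b'] [c d] [c' d']; rewrite !gcongE /gmul /=.
move=> /andP[h1 h2] /andP[h3 h4].
have -> : a * c - b * d - (a' * c' - b' * d') =
  (a - a') * c + a' * (c - c') - ((b - b') * d + b' * (d - d')) by ring.
have -> : a * d + b * c - (a' * d' + b' * c') =
  (a - a') * d + a' * (d - d') + ((b - b') * c + b' * (c - c')) by ring.
by apply/andP; split; [apply: rpredB | apply: rpredD]; apply: rpredD;
  first [exact: dvdz_mulr | exact: dvdz_mull].
Qed.

Lemma gcong_pow n z z' k : gcong n z z' -> gcong n (gpow z k) (gpow z' k).
Proof.
move=> h; elim: k => [|k IH]; first exact: gcong_refl.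
by rewrite !gpowS gcong_mul.
Qed.

Lemma gcong_conj n z z' : gcong n z z' -> gcong n (gconj z) (gconj z').
Proof. by rewrite !gcongE /gconj /= -opprD rpredN. Qed.

Lemma gcong_dvd m n z w : (m %| n)%N -> gcong n z w -> gcong m z w.
Proof.
move=> mn; rewrite !gcongE => /andP[h1 h2].
have mnz : (m%:Z %| n%:Z)%Z by rewrite dvdzE.
by rewrite (dvdz_trans mnz h1) (dvdz_trans mnz h2).
Qed.

Lemma gcong1X m g q : gcong m g gone -> gcong m (gpow g q) gone.
Proof. by move=> h; rewrite -(gpow1n q); apply: gcong_pow. Qed.

Lemma gcong1_dvdX m g a b : (a %| b)%N -> gcong m (gpow g a) gone ->
  gcong m (gpow g b) gone.
Proof. by move=> /dvdnP[c ->] h; rewrite mulnC gpowM gcong1X. Qed.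

Lemma gnorm_cong m z w : gcong m z w -> (gnorm z == gnorm w %[mod m])%Z.
Proof.
move=> h; have := gcong_mul h (gcong_conj h).
by rewrite !gmul_conj /gcong /= => /andP[].
Qed.

Lemma gcong_part n z w : (0 < n)%N ->
  (forall p, prime p -> (p %| n)%N -> gcong (p ^ logn p n) z w) -> gcong n z w.
Proof.
move=> n0 H; rewrite gcongE.
suff dvd_part x : (forall p, prime p -> (p %| n)%N -> ((p ^ logn p n)%:Z %| x)%Z) ->
    (n%:Z %| x)%Z.
  by apply/andP; split; apply: dvd_part => p pp pn;
    move: (H p pp pn); rewrite gcongE => /andP[h1 h2].
move=> Hx; rewrite dvdzE /=; apply/(dvdn_partP _ n0) => p.
rewrite mem_primes p_part => /and3P[pp _ pn].
by have := Hx p pp pn; rewrite dvdzE.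
Qed.

End Congruence.

(* The Carmichael condition with exponent k: (z / conj z)^k = 1 in Z[i]/nZ[i]
   for every z of norm prime to n, stated without inverses. *)
Definition conj_pow_cong (n k : nat) : Prop :=
  forall z, coprimez n (gnorm z) -> gcong n (gpow z k) (gpow (gconj z) k).

Lemma coprimez_prime p (x : int) : prime p -> coprimez p x = ~~ (p %| x)%Z.
Proof. by move=> pp; rewrite coprimezE /= prime_coprime // dvdzE. Qed.

Section Embedding.
Local Open Scope ring_scope.
Variables (R : comNzRingType) (j : R).
Hypothesis j2 : j ^+ 2 = -1.

Definition gembed (z : gauss) : R := z.1%:~R + z.2%:~R * j.

Lemma gembed1 : gembed gone = 1.
Proof. by rewrite /gembed /= mul0r addr0. Qed.

Lemma gembedM z w : gembed (gmul z w) = gembed z * gembed w.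
Proof.
case: z w => a b [c d]; rewrite /gembed /gmul /= !(intrD, intrB, intrM).
apply/eqP; rewrite -subr_eq0; apply/eqP.
transitivity (- (b%:~R * d%:~R) * (j ^+ 2 + 1)); first ring.
by rewrite j2 addNr mulr0.
Qed.

Lemma gembedX z k : gembed (gpow z k) = gembed z ^+ k.
Proof. by elim: k => [|k IH]; rewrite ?gembed1 // gpowS gembedM IH exprS. Qed.

Lemma gembed_conj z : gembed (gconj z) = z.1%:~R - z.2%:~R * j.
Proof. by rewrite /gembed /gconj /= intrN mulNr. Qed.

Lemma gembed_norm z : gembed z * gembed (gconj z) = (gnorm z)%:~R.
Proof. by rewrite -gembedM gmul_conj /gembed /= mul0r addr0. Qed.

Lemma gembed_cong p z w : p \in [pchar R] -> gcong p z w -> gembed z = gembed w.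
Proof.
move=> pcharR; rewrite gcongE !(dvdz_pcharf pcharR) !intrB !subr_eq0.
by rewrite /gembed => /andP[/eqP -> /eqP ->].
Qed.

End Embedding.

Section FiniteField.
Local Open Scope ring_scope.
Variable F : finFieldType.

Lemma finField_generator :
  exists2 u : F, u != 0 & forall d, (u ^+ d == 1) = (#|F|.-1 %| d)%N.
Proof.
have /cyclicP[u defG] := field_unit_group_cyclic [set: {unit F}]%G.
exists (val u) => [|d]; first by rewrite -unitfE (valP u).
have ou : #[u]%g = #|F|.-1 by rewrite /order -defG card_finField_unit.
by rewrite -ou order_dvdn -val_unitX -val_unit1 val_eqE.
Qed.

Lemma finField_exponent_dvd d :
  (forall x : F, x != 0 -> x ^+ d = 1) -> (#|F|.-1 %| d)%N.
Proof.
by have [u u0 hu] := finField_generator; move=> h; rewrite -hu h.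
Qed.

Lemma finField_fermat (x : F) : x != 0 -> x ^+ #|F|.-1 = 1.
Proof.
move=> x0; apply: (mulfI x0); rewrite mulr1 -exprS prednK ?expf_card //.
exact: ltnW (finNzRing_gt1 F).
Qed.

Lemma finField_sqrtN1 : (4 %| #|F|.-1)%N -> (-1 : F) != 1 ->
  exists j : F, j ^+ 2 = -1.
Proof.
move=> /dvdnP[q Eq] m1; have [u _ hu] := finField_generator.
exists (u ^+ q); have : (u ^+ q ^+ 2) ^+ 2 == 1 by rewrite -!exprM hu Eq mulnA.
rewrite sqrf_eq1 => /orP[|/eqP //]; rewrite -exprM hu Eq.
have q0 : (0 < q)%N by move: (finNzRing_gt1 F); rewrite -ltn_predRL Eq; lia.
by move=> /dvdn_leq; lia.
Qed.

End FiniteField.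

Lemma ord_pair_of_gcong p (a b a' b' : 'I_p) :
  gcong p (Posz a, Posz b) (Posz a', Posz b') -> (a, b) = (a', b').
Proof.
have small (x y : 'I_p) : (p%:Z %| (x%:Z - y%:Z)%R)%Z -> x = y.
  rewrite dvdzE /= => h; apply: ord_inj; apply/eqP/negPn/negP => /eqP ne.
  have := dvdn_leq _ h; have := ltn_ord x; have := ltn_ord y; lia.
by rewrite gcongE /= => /andP[/small -> /small ->].
Qed.

Section OddCharacteristic.
Local Open Scope ring_scope.
Variables (F : finFieldType) (p : nat) (j : F).
Hypotheses (pcharF : p \in [pchar F]) (p_odd : odd p) (j2 : j ^+ 2 = -1).

Lemma two_neq0 : (2%:R : F) != 0.
Proof.
rewrite -(dvdn_pcharf pcharF) dvdn_prime2 ?(pcharf_prime pcharF) //.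
by apply: contraTneq p_odd => ->.
Qed.

Lemma N1_neq1 : (-1 : F) != 1.
Proof.
apply/eqP => h; move: two_neq0.
by rewrite mulr2n -{1}h addNr eqxx.
Qed.

Lemma j_neq0 : j != 0.
Proof.
apply/eqP => j0; move: j2; rewrite j0 expr0n /= => /eqP.
by rewrite eq_sym oppr_eq0 oner_eq0.
Qed.

(* x + y j = x - y j = 0 in F forces p | x and p | y, because 2 and j
   are invertible. *)
Lemma dvdz_of_gembed (x y : int) :
  x%:~R + y%:~R * j = 0 :> F -> x%:~R - y%:~R * j = 0 :> F ->
  (p %| x)%Z /\ (p %| y)%Z.
Proof.
move=> e1 e2; rewrite !(dvdz_pcharf pcharF).
have ex : (x%:~R : F) * 2%:R = 0 by rewrite -[RHS](addr0 0) -{1}e1 -e2; ring.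
move/eqP: ex; rewrite mulf_eq0 (negbTE two_neq0) orbF => /eqP ex.
by move/eqP: e1; rewrite ex add0r mulf_eq0 (negbTE j_neq0) orbF => ->.
Qed.

Lemma gcong_of_gembed z w : gembed j z = gembed j w ->
  gembed j (gconj z) = gembed j (gconj w) -> gcong p z w.
Proof.
move=> e1 e2; rewrite gcongE; apply/andP; apply: dvdz_of_gembed.
  transitivity (gembed j z - gembed j w); last by rewrite e1 subrr.
  by rewrite !intrB /gembed; ring.
transitivity (gembed j (gconj z) - gembed j (gconj w)); last by rewrite e2 subrr.
by rewrite !intrB !gembed_conj; ring.
Qed.

Lemma gembed_inGn g : inGn p g -> gembed j g * gembed j (gconj g) = 1.
Proof.
rewrite /inGn eqz_mod_dvd (dvdz_pcharf pcharF) intrB subr_eq0 => /eqP hn.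
by rewrite gembed_norm.
Qed.

Lemma coprime_gembed z : gembed j z * gembed j (gconj z) != 0 -> coprimez p (gnorm z).
Proof.
rewrite coprimez_prime ?(pcharf_prime pcharF) // (dvdz_pcharf pcharF).
by rewrite gembed_norm.
Qed.

Section SplitPrime.
Hypothesis cardF : #|F| = p.

Lemma split_gembed_onto (x y : F) :
  exists z, gembed j z = x /\ gembed j (gconj z) = y.
Proof.
pose f (ab : 'I_p * 'I_p) :=
  (gembed j (Posz ab.1, Posz ab.2), gembed j (gconj (Posz ab.1, Posz ab.2))).
have f_inj : injective f.
  by move=> [a b] [a' b'] [e1 e2]; apply/ord_pair_of_gcong/gcong_of_gembed.
have le_card : (#|{: F * F}| <= #|{: 'I_p * 'I_p}|)%N.
  by rewrite !card_prod card_ord cardF.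
have /codomP[[a b] [-> ->]] := inj_card_onto f_inj le_card (x, y).
by exists (Posz a, Posz b).
Qed.

(* F(p) = p - 1 kills G_p for split p: its images are units of F_p. *)
Lemma split_exponent g : inGn p g -> gcong p (gpow g p.-1) gone.
Proof.
move=> /gembed_inGn hn.
have /andP[g0 cg0] : (gembed j g != 0) && (gembed j (gconj g) != 0).
  by rewrite -negb_or -mulf_eq0 hn oner_neq0.
by apply: gcong_of_gembed; rewrite ?gconj1 ?gconjX gembedX // gembed1 -cardF
  finField_fermat.
Qed.

(* The Carmichael condition mod p for k makes x^k = 1 for every unit x of
   F_p (take z with images x and 1), so p - 1 | k. *)
Lemma split_exponent_lb k : conj_pow_cong p k -> (p.-1 %| k)%N.
Proof.
move=> hk; rewrite -cardF; apply: finField_exponent_dvd => x x0.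
have [z [zx z1]] := split_gembed_onto x 1.
have zp : coprimez p (gnorm z) by rewrite coprime_gembed // zx z1 mulr1.
have := gembed_cong j pcharF (hk z zp).
by rewrite !gembedX // zx z1 expr1n.
Qed.

End SplitPrime.

Section InertPrime.
Hypotheses (p_mod4 : (p %% 4 = 3)%N) (cardF : #|F| = (p ^ 2)%N).

Lemma j_frobenius : j ^+ p = - j.
Proof.
rewrite (divn_eq p 4) p_mod4 exprD mulnC exprM.
have -> : j ^+ 4 = 1 by rewrite (_ : 4 = 2 * 2)%N // exprM j2 sqrrN expr1n.
by rewrite expr1n mul1r exprS j2 mulrN1.
Qed.

Lemma gembed_frobenius z : gembed j z ^+ p = gembed j (gconj z).
Proof.
rewrite /gembed -(pFrobenius_autE pcharF) rmorphD rmorphM /=.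
rewrite !(pFrobenius_autE pcharF) j_frobenius.
rewrite -!(pFrobenius_autE pcharF) !pFrobenius_aut_int.
by rewrite /gconj /= intrN mulrN mulNr.
Qed.

Lemma gcong_of_gembed_inert z w : gembed j z = gembed j w -> gcong p z w.
Proof. by move=> e; apply: gcong_of_gembed => //; rewrite -!gembed_frobenius e. Qed.

Lemma inert_gembed_onto y : exists z, gembed j z = y.
Proof.
pose f (ab : 'I_p * 'I_p) := gembed j (Posz ab.1, Posz ab.2).
have f_inj : injective f.
  by move=> [a b] [a' b'] e; apply/ord_pair_of_gcong/gcong_of_gembed_inert.
have le_card : (#|F| <= #|{: 'I_p * 'I_p}|)%N.
  by rewrite !card_prod card_ord cardF.
have /codomP[[a b] ->] := inj_card_onto f_inj le_card y.
by exists (Posz a, Posz b).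
Qed.

(* F(p) = p + 1 kills G_p for inert p: g^(p+1) maps to N(g) = 1. *)
Lemma inert_exponent g : inGn p g -> gcong p (gpow g p.+1) gone.
Proof.
move=> /gembed_inGn hn; apply: gcong_of_gembed_inert.
by rewrite gembedX // exprSr gembed_frobenius mulrC hn gembed1.
Qed.

(* The Carmichael condition mod p for k gives y^k = y^(pk) for every unit y
   of F_(p^2), so p^2 - 1 | (p - 1) k, i.e. p + 1 | k. *)
Lemma inert_exponent_lb k : conj_pow_cong p k -> (p.+1 %| k)%N.
Proof.
move=> hk; have p1 : (0 < p.-1)%N by move: p_mod4; case: (p) => [|[|q]].
rewrite -(dvdn_pmul2l p1) (_ : p.-1 * p.+1 = #|F|.-1)%N; last first.
  by rewrite cardF; move: p1; case: (p) => [|q] //= _; nia.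
apply: finField_exponent_dvd => y y0.
have [z zy] := inert_gembed_onto y.
have zp : coprimez p (gnorm z).
  by rewrite coprime_gembed // -gembed_frobenius zy mulf_neq0 ?expf_neq0.
have := gembed_cong j pcharF (hk z zp).
rewrite !gembedX // -gembed_frobenius zy -exprM.
have -> : (p * k = k + p.-1 * k)%N by rewrite -mulSn prednK //; lia.
rewrite exprD => e.
by apply: (mulfI (expf_neq0 k y0)); rewrite mulr1 -e.
Qed.

End InertPrime.
End OddCharacteristic.

Lemma odd_mod4 p : odd p -> p %% 4 = 1 \/ p %% 4 = 3.
Proof. by move=> po; have := modn2 p; rewrite po; lia. Qed.

Lemma FF_mod1 p : p %% 4 = 1 -> FF p = p.-1.
Proof. by rewrite /FF => ->. Qed.

Lemma FF_mod3 p : p %% 4 = 3 -> FF p = p.+1.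
Proof. by rewrite /FF => ->. Qed.

Lemma FF_even n : ~~ odd n -> FF n = n.
Proof.
move=> ne; have : n %% 2 = 0 by rewrite modn2 (negbTE ne).
by rewrite /FF; case: ifP => [/eqP|_]; [lia | case: ifP => [/eqP|//]; lia].
Qed.

Lemma FF_odd n : odd n -> FF n = n.-1 \/ FF n = n.+1.
Proof. by case/odd_mod4 => h; [left; rewrite FF_mod1 | right; rewrite FF_mod3]. Qed.

Lemma FF_bounds n : 1 < n -> 0 < FF n <= n.+1.
Proof. by move=> n1; rewrite /FF; case: ifP => _; [lia | case: ifP => _; lia]. Qed.

Lemma dvd4_FF p : odd p -> 4 %| FF p.
Proof.
case/odd_mod4 => h; [rewrite FF_mod1 // | rewrite FF_mod3 //].
  by rewrite (divn_eq p 4) h addn1 dvdn_mull.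
by apply/dvdnP; exists (p %/ 4).+1; lia.
Qed.

Lemma coprime_FF p : odd p -> coprime p (FF p).
Proof.
case/odd_mod4 => h; [rewrite FF_mod1 // | rewrite FF_mod3 ?coprimenS //].
by rewrite -{1}(@prednK p) ?coprimeSn //; lia.
Qed.

Lemma gaussian_residue_field p : prime p -> odd p ->
  exists F : finFieldType, exists2 j : F, p \in [pchar F]%R /\ (j ^+ 2 = -1)%R &
    (p %% 4 = 1 /\ #|F| = p) \/ (p %% 4 = 3 /\ #|F| = p ^ 2).
Proof.
move=> pp po.
have field_of k : 0 < k -> 4 %| (p ^ k).-1 -> exists F : finFieldType,
    exists2 j : F, p \in [pchar F]%R /\ (j ^+ 2 = -1)%R & #|F| = p ^ k.
  move=> k0 h4; have [F pcharF cardF] := pPrimePowerField pp k0.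
  have [j j2] : exists j : F, (j ^+ 2 = -1)%R.
    by apply: finField_sqrtN1; rewrite ?cardF ?(N1_neq1 pcharF po).
  by exists F, j.
have [p1|p3] := odd_mod4 po.
  have [|F [j Fj cardF]] := field_of 1 isT.
    by rewrite expn1 (divn_eq p 4) p1 addn1 dvdn_mull.
  by exists F, j => //; left; rewrite cardF expn1.
have [|F [j Fj cardF]] := field_of 2 isT; last by exists F, j => //; right.
rewrite (divn_eq p 4) p3; apply/dvdnP; exists ((4 * (p %/ 4) + 2) * (p %/ 4 + 1)).
rewrite expnS expn1; nia.
Qed.

Lemma prime_exponent p g : prime p -> odd p -> inGn p g ->
  gcong p (gpow g (FF p)) gone.
Proof.
move=> pp po; have [F [j [pcharF j2] [[p1 cardF]|[p3 cardF]]]] :=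
  gaussian_residue_field pp po.
  by rewrite FF_mod1 //; apply: (split_exponent pcharF po j2 cardF).
by rewrite FF_mod3 //; apply: (inert_exponent pcharF po j2 p3).
Qed.

Lemma conj_pow_prime_lb p k : prime p -> odd p -> conj_pow_cong p k -> FF p %| k.
Proof.
move=> pp po; have [F [j [pcharF j2] [[p1 cardF]|[p3 cardF]]]] :=
  gaussian_residue_field pp po.
  by rewrite FF_mod1 //; apply: (split_exponent_lb pcharF po j2 cardF).
by rewrite FF_mod3 //; apply: (inert_exponent_lb pcharF po j2 p3 cardF).
Qed.

Lemma inGn_dvd m n g : m %| n -> inGn n g -> inGn m g.
Proof. by move=> mn; rewrite /inGn !eqz_mod_dvd; apply: dvdz_trans; rewrite dvdzE. Qed.

Section Lifting.
Local Open Scope ring_scope.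

(* Binomial expansion to first order: (1 + m(u + v i))^t ~ 1 + tm(u + v i)
   (mod m^2). *)
Lemma gpow_one_plus (m : nat) (u v : int) (t : nat) :
  gcong (m * m) (gpow (1 + u * m%:Z, v * m%:Z) t)
    (1 + t%:Z * m%:Z * u, t%:Z * m%:Z * v).
Proof.
elim: t => [|t IH]; first by rewrite !mul0r addr0 gcong_refl.
apply: gcong_trans; first exact: gcong_mul (gcong_refl _ _) IH.
rewrite gcongE /gmul /= !PoszM -addn1 !PoszD; apply/andP; split; apply/dvdzP.
  by exists (t%:Z * u * u - t%:Z * v * v); ring.
by exists (t%:Z * u * v *+ 2); ring.
Qed.

Lemma gcong_lift (m q : nat) g : (q * m %| m * m)%N -> gcong m g gone ->
  gcong (q * m) (gpow g q) gone.
Proof.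
move=> qm_dvd; rewrite gcongE /= subr0 => /andP[/dvdzP[u eu] /dvdzP[v ev]].
have -> : g = (1 + u * m%:Z, v * m%:Z).
  by case: g eu ev => a b /= eu ->; congr pair; rewrite -eu; ring.
apply: gcong_trans (gcong_dvd qm_dvd (gpow_one_plus m u v q)) _.
rewrite gcongE /= subr0 addrAC subrr add0r PoszM.
by apply/andP; split; apply: dvdz_mulr.
Qed.

End Lifting.

Lemma odd_prime_power_exponent p g e : prime p -> odd p -> inGn p g ->
  gcong (p ^ e.+1) (gpow g (p ^ e * FF p)) gone.
Proof.
move=> pp po g1; elim: e => [|e IH]; first by rewrite expn1 mul1n prime_exponent.
rewrite (expnSr p e) mulnAC gpowM (expnS p e.+1) gcong_lift //.
by rewrite mulnC dvdn_pmul2l ?expn_gt0 ?prime_gt0 // dvdn_exp.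
Qed.

Lemma two_power_exponent g e : inGn 2 g -> gcong (2 ^ e.+1) (gpow g (2 ^ e.+1)) gone.
Proof.
move=> g1; elim: e => [|e IH].
  move: g1; rewrite /inGn eqz_mod_dvd expn1 /gpow /= gmulr1 gcongE /gmul /gnorm /=.
  move=> g1; apply/andP; split; last by apply/dvdzP; exists (g.1 * g.2)%R; ring.
  have -> : (g.1 * g.1 - g.2 * g.2 - 1 = (g.1 ^+ 2 + g.2 ^+ 2 - 1) - g.2 * g.2 * 2)%R.
    by ring.
  by apply: rpredB => //; apply: dvdz_mull.
rewrite (expnS 2 e.+1) {2}mulnC gpowM gcong_lift //.
by rewrite mulnC dvdn_pmul2l ?expn_gt0 // dvdn_exp.
Qed.

Definition Gn_killed_by (n k : nat) : Prop :=
  forall g, inGn n g -> gcong n (gpow g k) gone.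

Lemma Gn_killed_by_local n k : 0 < n ->
  (forall p, prime p -> p %| n -> odd p -> p ^ (logn p n).-1 * FF p %| k) ->
  (2 %| n -> 2 ^ logn 2 n %| k) -> Gn_killed_by n k.
Proof.
move=> n0 Hodd H2 g g1; apply: gcong_part => // p pp pn.
have e0 : 0 < logn p n by rewrite logn_gt0 mem_primes pp n0 pn.
have gp := inGn_dvd pn g1; rewrite -(prednK e0).
have [p2|po] := even_prime pp.
  by subst p; apply: gcong1_dvdX (two_power_exponent _ gp); rewrite prednK ?H2.
by apply: gcong1_dvdX (odd_prime_power_exponent _ pp po gp); apply: Hodd.
Qed.

Lemma Gn_killed_by_factorial n : 0 < n -> Gn_killed_by n (n * (n.+1)`!).
Proof.
move=> n0; apply: Gn_killed_by_local => // [p pp pn po|_].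
  apply: dvdn_mul; first exact: dvdn_trans (dvdn_exp2l _ (leq_pred _)) (pfactor_dvdnn p n).
  have /andP[FF0 FFp] := FF_bounds (prime_gt1 pp).
  by rewrite dvdn_fact // FF0 (leq_trans FFp) // ltnS dvdn_leq.
by rewrite dvdn_mulr // pfactor_dvdnn.
Qed.

Lemma Lambda_spec n : 0 < n -> is_exponent_Gn n (Lambda n).
Proof.
move=> n0; apply: epsilon_spec.
pose P m := 0 < m /\ Gn_killed_by n m.
have P_inh : exists m, P m.
  exists (n * (n.+1)`!); split; last exact: Gn_killed_by_factorial.
  by rewrite muln_gt0 n0 fact_gt0.
have [m [[[m0 km] mmin] _]] :=
  dec_inh_nat_subset_has_unique_least_element P (fun m => classic (P m)) P_inh.
exists m; split=> //; split=> // m' m'0 km'.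
by apply/leP; apply: mmin (conj m'0 km').
Qed.

Lemma Lambda_dvdP n k : 0 < n -> 0 < k -> Lambda n %| k <-> Gn_killed_by n k.
Proof.
move=> n0 k0; have [L0 [kL Lmin]] := Lambda_spec n0.
split=> [Lk g g1|kk]; first exact: gcong1_dvdX Lk (kL g g1).
rewrite /dvdn; have [//|r0] := posnP (k %% Lambda n).
suff : Lambda n <= k %% Lambda n by rewrite leqNgt ltn_mod L0.
apply: Lmin => // g g1; apply: gcong_trans (kk g g1).
rewrite {2}(divn_eq k (Lambda n)) addnC gpowD -{1}[gpow g (k %% _)]gmulr1.
apply: gcong_mul (gcong_refl _ _) (gcong_sym _).
by apply: gcong1_dvdX (kL g g1); rewrite dvdn_mull.
Qed.

Lemma coprimez_primes n (x : int) : 1 < n ->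
  (forall q, prime q -> q %| n -> ~~ (q %| x)%Z) -> coprimez n x.
Proof.
move=> n1 H; rewrite coprimezE /=.
have [x0|x0] := posnP `|x|%N.
  by have := H _ (pdiv_prime n1) (pdiv_dvd n); rewrite dvdzE x0 dvdn0.
rewrite coprime_has_primes ?(ltnW n1) //; apply/hasPn => q.
rewrite !mem_primes => /and3P[pq _ qx]; rewrite pq /=.
by apply/negP => /andP[_ qn]; have := H q pq qn; rewrite dvdzE qx.
Qed.

Lemma gcong1_ndvd_norm q z : 1 < q -> gcong q z gone -> ~~ (q %| gnorm z)%Z.
Proof.
move=> q1 /gnorm_cong; rewrite eqz_mod_dvd /= => h1.
apply/negP => h2; have := rpredB h2 h1.
rewrite (_ : (gnorm z - (gnorm z - 1) = 1)%R); last by ring.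
by rewrite dvdzE /= dvdn1 => /eqP q1'; rewrite q1' in q1.
Qed.

Lemma conj_pow_of_quot n z k : quot_pow_one n z k ->
  gcong n (gpow z k) (gpow (gconj z) k).
Proof.
move=> [w [cw zw]].
have e : gmul (gpow (gconj z) k) (gpow (gmul z w) k) =
         gmul (gpow z k) (gpow (gmul (gconj z) w) k).
  by rewrite !gpowMn !gmulA (gmulC (gpow (gconj z) k)).
have lhs : gcong n (gmul (gpow (gconj z) k) (gpow (gmul z w) k)) (gpow (gconj z) k).
  by rewrite -[X in gcong _ _ X]gmulr1; apply: gcong_mul (gcong_refl _ _) zw.
have rhs : gcong n (gmul (gpow z k) (gpow (gmul (gconj z) w) k)) (gpow z k).
  by rewrite -[X in gcong _ _ X]gmulr1; apply: gcong_mul (gcong_refl _ _) (gcong1X _ cw).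
by rewrite e in lhs; apply: gcong_trans (gcong_sym rhs) lhs.
Qed.

(* (ii) => (i): if F(n) kills G_n then n is a Gaussian Carmichael number,
   since z / conj z = z^2 / N(z) lies in G_n. *)
Lemma carmichael_of_killed n : composite n -> Gn_killed_by n (FF n) ->
  gauss_carmichael n.
Proof.
move=> n_comp kn; split=> // z cz; split=> //; split=> //.
have [u [v e]] := Bezoutz n (gnorm z).
move: cz; rewrite /coprimez => /eqP g1; rewrite g1 in e.
have nd : (n%:Z %| (gnorm z * v - 1)%R)%Z.
  rewrite (_ : (gnorm z * v - 1 = - u * n%:Z)%R); last by rewrite -e; ring.
  exact/dvdz_mull/dvdzz.
exists (gmul z (v, 0%R)); split.
  rewrite gmulA (gmulC (gconj z)) gmul_conj gcongE /gmul /=.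
  by rewrite !(mulr0, mul0r, subr0, addr0) nd dvdz0.
apply: kn; rewrite /inGn eqz_mod_dvd.
rewrite (_ : (gnorm (gmul z (gmul z (v, 0%R))) - 1 =
              (gnorm z * v - 1) * (gnorm z * v + 1))%R); last first.
  by rewrite !gnormM /gnorm /=; ring.
exact: dvdz_mulr.
Qed.

Lemma carmichael_conj_pow n : gauss_carmichael n -> conj_pow_cong n (FF n).
Proof. by move=> [_ H] z cz; have [_ [_ q]] := H z cz; apply: conj_pow_of_quot. Qed.

(* If p^2 | n (p odd) then the Carmichael condition with exponent k forces
   p | k: test it on z = 1 + (n/p) i. *)
Lemma conj_pow_prime_sq n k p : 0 < n -> conj_pow_cong n k -> prime p -> odd p ->
  p * p %| n -> p %| k.
Proof.
move=> n0 hk pp po /dvdnP[c en]; set m := c * p.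
have m0 : 0 < m by move: n0; rewrite en mulnA muln_gt0 => /andP[].
have n1 : 1 < n by rewrite en mulnA (leq_trans (prime_gt1 pp)) // leq_pmull.
have nmm : n %| m * m by apply/dvdnP; exists c; rewrite en /m; ring.
pose z : gauss := ((1 + 0 * m%:Z)%R, (1 * m%:Z)%R).
have cz : coprimez n (gnorm z).
  apply: coprimez_primes => // q qp qn; apply: gcong1_ndvd_norm (prime_gt1 qp) _.
  have qm : q %| m.
    move: qn; rewrite en mulnA -/m Euclid_dvdM // => /orP[//|qp'].
    exact: dvdn_trans qp' (dvdn_mull c (dvdnn p)).
  rewrite gcongE /= !mul1r !mul0r addr0 subrr dvdz0 subr0.
  by rewrite dvdzE.
have := hk z cz.
rewrite (_ : gconj z = ((1 + 0 * m%:Z)%R, (-1 * m%:Z)%R)); last by rewrite /gconj /=; congr pair; ring.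
move=> /(gcong_trans (gcong_sym (gcong_dvd nmm (gpow_one_plus m 0 1 k)))) h.
have := gcong_trans h (gcong_dvd nmm (gpow_one_plus m 0 (-1) k)).
rewrite gcongE /= => /andP[_].
rewrite (_ : (k%:Z * m%:Z * 1 - k%:Z * m%:Z * -1 = (m * (2 * k))%N%:Z)%R); last first.
  by rewrite !PoszM; ring.
rewrite dvdzE /= en /m mulnA -/m dvdn_pmul2l // Gauss_dvdr //.
by rewrite prime_coprime // dvdn_prime2 //; apply: contraTneq po => ->.
Qed.

(* The Carmichael condition descends to the prime divisors of n: given z0
   of norm prime to p, pick z ~ z0 (mod p) and z ~ 1 modulo the other
   primes dividing n. *)
Lemma conj_pow_prime n k p : 1 < n -> conj_pow_cong n k -> prime p -> p %| n ->
  conj_pow_cong p k.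
Proof.
move=> n1 hk pp pn z0 cz0; have n0 := ltnW n1.
set e := logn p n; set m := n %/ p ^ e.
have en : n = m * p ^ e by rewrite divnK // pfactor_dvdnn.
have pm : coprime m p.
  rewrite coprime_sym prime_coprime //; apply/negP => /dvdnP[c ec].
  have : p ^ e.+1 %| n by rewrite en ec expnS mulnAC -mulnA dvdn_mull ?dvdnn // mulnC.
  by rewrite pfactor_dvdn // ltnn.
have hq q : prime q -> q %| n -> q != p -> q %| m.
  move=> qp; rewrite en Euclid_dvdM // => /orP[//|].
  by rewrite Euclid_dvdX // dvdn_prime2 // => /andP[/eqP ->]; rewrite eqxx.
have gmp : gcdz m p = 1%R by apply/eqP; rewrite -/(coprimez m p) coprimezE; exact: pm.
have [u [v euv]] := Bezoutz m p; rewrite gmp in euv.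
(* t = u m is 0 modulo m and 1 modulo p *)
set t := (u * m%:Z)%R.
have et : t = (1 - v * p%:Z)%R by rewrite /t -euv; ring.
pose z : gauss := ((1 + t * (z0.1 - 1))%R, (t * z0.2)%R).
have zz0 : gcong p z z0.
  rewrite gcongE /= et; apply/andP; split; apply/dvdzP.
    by exists (- v * (z0.1 - 1))%R; ring.
  by exists (- v * z0.2)%R; ring.
have cz : coprimez n (gnorm z).
  apply: coprimez_primes => // q qp qn.
  have [->|qne] := eqVneq q p.
    rewrite -coprimez_prime //; move: cz0; rewrite !coprimez_prime //.
    apply: contra => pz; have := gnorm_cong zz0; rewrite eqz_mod_dvd => pzz.
    rewrite (_ : gnorm z0 = gnorm z - (gnorm z - gnorm z0))%R; last by ring.
    exact: rpredB.
  apply: gcong1_ndvd_norm (prime_gt1 qp) _.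
  have qt : (q%:Z %| t)%Z by rewrite /t; apply: dvdz_mull; rewrite dvdzE /= hq.
  rewrite gcongE /= subr0 addrAC subrr add0r.
  by apply/andP; split; apply: dvdz_mulr.
apply: gcong_trans (gcong_pow k (gcong_conj zz0)).
apply: gcong_trans (gcong_dvd pn (hk z cz)).
exact: gcong_pow k (gcong_sym zz0).
Qed.

Lemma squarefree_logn n p : squarefree_nat n -> 0 < n -> prime p -> p %| n ->
  logn p n = 1.
Proof.
move=> sq n0 pp pn; have pl : p < n.+1 by rewrite ltnS dvdn_leq.
have := forallP sq (Ordinal pl); rewrite /= pp /= pfactor_dvdn // -ltnNge ltnS.
have : 0 < logn p n by rewrite logn_gt0 mem_primes pp n0 pn.
lia.
Qed.

Lemma killed_of_criterion n : composite n ->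
  (forall p : nat, prime p -> p %| n -> FF p %| FF n) ->
  (odd n && squarefree_nat n) ||
    ((4 %| n) && ((n %/ 4 \in [:: 2; 3; 5]) || ~~ prime (n %/ 4))) ->
  Gn_killed_by n (FF n).
Proof.
move=> /andP[n1 _] FFdvd; have n0 := ltnW n1.
case/orP => [/andP[no sq]|/andP[n4 _]].
  apply: Gn_killed_by_local => // [p pp pn po|].
    by rewrite squarefree_logn // expn0 mul1n FFdvd.
  by rewrite dvdn2 no.
have Fn : FF n = n by rewrite FF_even // -dvdn2 (dvdn_trans _ n4).
apply: Gn_killed_by_local => // [p pp pn po|_]; rewrite Fn; last exact: pfactor_dvdnn.
rewrite Gauss_dvd ?coprimeXl ?coprime_FF //.
rewrite (dvdn_trans _ (pfactor_dvdnn p n)) ?dvdn_exp2l ?leq_pred //=.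
by rewrite -Fn FFdvd.
Qed.

Section CarmichaelConsequences.
Variable n : nat.
Hypotheses (n_composite : composite n) (n_carm : conj_pow_cong n (FF n)).

Let n_gt1 : 1 < n. Proof. by case/andP: n_composite. Qed.

Lemma carm_FF_odd_prime p : prime p -> p %| n -> odd p -> FF p %| FF n.
Proof.
by move=> pp pn po; apply: conj_pow_prime_lb (conj_pow_prime n_gt1 n_carm pp pn).
Qed.

(* n is not twice an odd number: an odd prime q | n would give
   4 | F(q) | F(n) = n. *)
Lemma carm_even : 2 %| n -> 4 %| n.
Proof.
move=> n2; apply/negPn/negP => n4.
have n_mod4 : n %% 4 = 2 by move: n2 n4; rewrite /dvdn => /eqP; lia.
have n_ne2 : n <> 2 by move=> n2'; move: n_composite; rewrite n2'.
have m_gt1 : 1 < n %/ 2 by lia.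
have m_odd : odd (n %/ 2).
  have : (n %/ 2) %% 2 = 1 by lia.
  by rewrite modn2; case: odd.
have qp := pdiv_prime m_gt1.
have qo : odd (pdiv (n %/ 2)).
  by case: (even_prime qp) => // q2; move: (pdiv_dvd (n %/ 2)); rewrite q2 dvdn2 m_odd.
have qn : pdiv (n %/ 2) %| n by rewrite (dvdn_trans (pdiv_dvd _)) // dvdn_div.
have := dvdn_trans (dvd4_FF qo) (carm_FF_odd_prime qp qn qo).
by rewrite FF_even -?dvdn2 //; apply/negP.
Qed.

(* F(p) | F(n) for all primes p | n (F(2) = 2 | n = F(n) for even n). *)
Lemma carm_FF_prime p : prime p -> p %| n -> FF p %| FF n.
Proof.
move=> pp pn; have [p2|po] := even_prime pp; last exact: carm_FF_odd_prime.
by subst p; rewrite !FF_even -?dvdn2.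
Qed.

(* An odd Carmichael n is squarefree: p^2 | n gives p | F(n) = n -+ 1. *)
Lemma carm_odd_squarefree : odd n -> squarefree_nat n.
Proof.
move=> no; apply/forallP => -[p pl] /=; apply/implyP => pp; apply/negP => p2n.
have pn : p %| n by apply: dvdn_trans p2n; rewrite dvdn_exp.
have po : odd p by case: (even_prime pp) pn => // ->; rewrite dvdn2 no.
have := conj_pow_prime_sq (ltnW n_gt1) n_carm pp po; rewrite mulnn => /(_ p2n).
have n0 := ltnW n_gt1; have p1 := prime_gt1 pp.
case: (FF_odd no) => -> hp.
  have : p %| n.-1 + 1 by rewrite addn1 prednK.
  by rewrite dvdn_addr // dvdn1 gtn_eqF.
by move: hp; rewrite -addn1 dvdn_addr // dvdn1 gtn_eqF.
Qed.

(* If n = 4q with q an odd prime then F(q) | F(n) = 4q and F(q) is prime to q,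
   so F(q) | 4, i.e. q = 3 or q = 5. *)
Lemma carm_quarter_prime : 4 %| n -> prime (n %/ 4) -> n %/ 4 \in [:: 2; 3; 5].
Proof.
move=> n4 qp; set q := n %/ 4 in qp *.
have en : n = q * 4 by rewrite /q divnK.
have [->//|qo] := even_prime qp.
have qn : q %| n by rewrite en dvdn_mulr.
have := carm_FF_odd_prime qp qn qo.
rewrite (FF_even (n:=n)); last by rewrite en oddM andbF.
rewrite en Gauss_dvdr; last by rewrite coprime_sym coprime_FF.
move=> /(dvdn_leq (isT : 0 < 4)) le4; have q1 := prime_gt1 qp; rewrite !inE.
case: (FF_odd qo) le4 => -> le4.
  have : q <= 5 by lia.
  by move: qo q1; case: (q) => [|[|[|[|[|[|]]]]]].
have : q <= 3 by lia.
by move: qo q1; case: (q) => [|[|[|[|]]]].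
Qed.

Lemma criterion_of_carm :
  (forall p : nat, prime p -> p %| n -> FF p %| FF n) /\
  ((odd n && squarefree_nat n) ||
   ((4 %| n) && ((n %/ 4 \in [:: 2; 3; 5]) || ~~ prime (n %/ 4)))).
Proof.
split; first exact: carm_FF_prime.
have [no|ne] := boolP (odd n); first by rewrite carm_odd_squarefree.
rewrite carm_even ?dvdn2 //= orbC.
by case: (boolP (prime _)) => //= qp; rewrite carm_quarter_prime ?carm_even ?dvdn2.
Qed.

End CarmichaelConsequences.

Theorem mainTheorem10 (n : nat) (hn : composite n) :
  (gauss_carmichael n <-> Lambda n %| FF n) /\
  (Lambda n %| FF n <->
     ((forall p : nat, prime p -> p %| n -> FF p %| FF n) /\
      ((odd n && squarefree_nat n) ||
       ((4 %| n) && ((n %/ 4 \in [:: 2; 3; 5]) || ~~ prime (n %/ 4)))))).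
Proof.
have /andP[n1 _] := hn.
have /andP[FF0 _] := FF_bounds n1.
have killedP := Lambda_dvdP (ltnW n1) FF0.
have carm_crit (h : gauss_carmichael n) := criterion_of_carm hn (carmichael_conj_pow h).
split; split.
- by move=> /carm_crit [FFdvd shape]; apply/killedP/killed_of_criterion.
- by move=> /killedP; apply: carmichael_of_killed.
- by move=> /killedP /(carmichael_of_killed hn) /carm_crit.
- by move=> [FFdvd shape]; apply/killedP/killed_of_criterion.
Qed.
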